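(* Consider a ROS~2 application executed on a single processor by the events executor with the two-queue mechanism described in the context, under the standing assumptions of the context, with ties in priority broken in LIFO order of release eligibility. Any element removed from the LIFO child queue is always a highest-priority element of that queue.
   Context: Model: a ROS~2 application is abstracted as a forest of trees of subtasks. Roots are released periodically/sporadically with known integer job priorities; a child subtask is released immediately when its parent completes (and only then), and inherits its parent's priority (fixed job-level priority). Execution is non-preemptive on a single processor; larger priority values mean higher priority. Executor mechanism: a released root subtask is pushed into a priority queue (root_queue); a released child subtask is assigned the value latest_priority and pushed onto a LIFO queue (child_queue); at each scheduling decision the tops of the two queues are compared, the one of greater priority is popped and executed, and latest_priority is set to its priority. *)

(* Abstract model of the ROS 2 events executor with the
   two-queue (root priority queue / child LIFO queue) mechanism. *)
From mathcomp Require Import all_boot all_order all_algebra.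
Set Implicit Arguments. Unset Strict Implicit. Unset Printing Implicit Defensive.
Import Order.TTheory GRing.Theory Num.Theory.
Local Open Scope ring_scope.

Section Executor.
Variable T : eqType.               (* subtasks of the application *)
Variable is_root : pred T.
Variable children : T -> seq T.

(* The release stamp records the order of release eligibility (larger =
   released later); it is only used to break ties in LIFO order. *)
Definition job := (T * int * nat)%type.
Definition jtask (j : job) : T := j.1.1.
Definition jprio (j : job) : int := j.1.2.
Definition jstamp (j : job) : nat := j.2.

Definition higher (a b : job) : bool :=
  (jprio b < jprio a) || ((jprio a == jprio b) && (jstamp b < jstamp a)%N).

Record state := State {
  rootq : seq job;        (* root_queue (priority queue, as a multiset) *)
  childq : seq job;       (* child_queue, LIFO; head = top of the stack *)
  latest : int;
  running : option job;   (* job executing non-preemptively, if any *)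
  clock : nat             (* next release stamp *)
}.

Fixpoint push_children (l : seq T) (p : int) (q : seq job) (k : nat)
  : seq job * nat :=
  match l with
  | [::] => (q, k)
  | c :: l' => push_children l' p ((c, p, k) :: q) k.+1
  end.

Definition is_top_root (s : state) (r : job) : Prop :=
  r \in rootq s /\ forall x, x \in rootq s -> x != r -> higher r x.

Inductive event := ERelease | EComplete | EPickRoot of job | EPickChild of job.

Inductive step : state -> event -> state -> Prop :=
  | step_release s r p :
      is_root r ->
      step s ERelease
        (State ((r, p, clock s) :: rootq s) (childq s) (latest s)
               (running s) (clock s).+1)
  | step_complete s j :
      running s = Some j ->
      let qk := push_children (children (jtask j)) (latest s) (childq s) (clock s) in
      step s EComplete (State (rootq s) qk.1 (latest s) None qk.2)
  | step_pick_root s r :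
      running s = None ->
      is_top_root s r ->
      (forall c rest, childq s = c :: rest -> higher r c) ->
      step s (EPickRoot r)
        (State (rem r (rootq s)) (childq s) (jprio r) (Some r) (clock s))
  | step_pick_child s c rest :
      running s = None ->
      childq s = c :: rest ->
      (forall r, is_top_root s r -> higher c r) ->
      step s (EPickChild c)
        (State (rootq s) rest (jprio c) (Some c) (clock s)).

Definition init_state (l0 : int) : state := State [::] [::] l0 None 0.

Inductive reachable (l0 : int) : state -> Prop :=
  | reach_init : reachable l0 (init_state l0)
  | reach_step s e s' : reachable l0 s -> step s e s' -> reachable l0 s'.

End Executor.

From mathcomp Require Import all_boot all_order all_algebra.
Import Order.TTheory GRing.Theory Num.Theory.
Local Open Scope ring_scope.

(* Read from the top, the priorities in the child queue never increase, and
   latest_priority bounds all of them. Completions push children with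
   priority latest_priority on top, which keeps this order; picking a child
   makes its priority, the maximum of the queue, the new latest_priority; and
   a root is only picked when it beats the top child, so latest_priority stays
   above the queue. Hence the top of the child queue, the only element ever
   removed from it, is a highest-priority element. *)

Lemma path_nseq_cat (A : Type) (r : rel A) (x : A) (n : nat) (s : seq A) :
  reflexive r -> path r x s -> path r x (nseq n x ++ s).
Proof. by move=> r_refl s_path; elim: n => //= n ->; rewrite andbT r_refl. Qed.

Section ChildQueue.
Variables (T : eqType) (is_root : pred T) (children : T -> seq T).

Lemma higher_le_prio (a b : job T) : higher a b -> jprio b <= jprio a.
Proof. by case/orP => [/ltW | /andP[/eqP -> _]]. Qed.

Lemma map_prio_push_children (l : seq T) (p : int) (q : seq (job T)) (k : nat) :
  map (@jprio T) (push_children l p q k).1 = nseq (size l) p ++ map (@jprio T) q.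
Proof.
elim: l q k => //= c l IH q k.
by rewrite IH /=; elim: (size l) => //= n ->.
Qed.

Definition child_queue_sorted (s : state T) : bool :=
  path >=%O (latest s) (map (@jprio T) (childq s)).

Lemma step_child_queue_sorted (s s' : state T) (e : event T) :
  step is_root children s e s' ->
  child_queue_sorted s -> child_queue_sorted s'.
Proof.
rewrite /child_queue_sorted.
case=> {s e s'} [s r p _ //| s j _ | s r _ _ beats_top | s c rest _ -> _] /=.
- by rewrite map_prio_push_children; apply: path_nseq_cat; apply: lexx.
- case: (childq s) beats_top => //= c rest /(_ c rest erefl) /higher_le_prio.
  by move=> le_c_r /andP[_ ->]; rewrite andbT.
- by case/andP.
Qed.

Lemma reachable_child_queue_sorted (l0 : int) (s : state T) :
  reachable is_root children l0 s -> child_queue_sorted s.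
Proof. by elim=> // {}s e s' _ IH /step_child_queue_sorted; apply. Qed.

End ChildQueue.

Theorem lemma5 (T : eqType) (is_root : pred T) (children : T -> seq T)
    (l0 : int) (s s' : state T) (c : job T) :
  reachable is_root children l0 s ->
  step is_root children s (EPickChild c) s' ->
  forall x, x \in childq s -> jprio x <= jprio c.
Proof.
move=> /reachable_child_queue_sorted sorted_s pick_c.
have [rest top_c] : exists rest, childq s = c :: rest.
  by inversion pick_c; exists rest.
move: sorted_s; rewrite /child_queue_sorted top_c /= => /andP[_ sorted_rest] x.
rewrite inE => /predU1P[-> // | x_rest].
have /allP := order_path_min ge_trans sorted_rest.
by apply; apply: map_f.
Qed.
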